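(* Fix $D,\alpha,\theta>0$. Let $G=(V,E)$ be a finite connected graph on $n$ vertices satisfying (bal), (mix), (esc) with parameters $D,\alpha,\theta$, with $n$ sufficiently large (depending only on $D,\alpha,\theta$). Let $\chi>0$ and let $W\subseteq V$ be a nonempty vertex set with $\mathrm{Cap}_r(W)\ge\chi r/\sqrt n$. Then $$\mathcal B_W(G)\le\theta+2D+\frac{36D}{\chi^2}.$$
   Context: $d(v)$ is the degree of $v$, $\delta(G),\Delta(G)$ the minimum and maximum degrees. The lazy random walk $(X_t)$ on $G$ at each step stays put with probability $1/2$ and otherwise moves along a uniformly chosen edge incident to the current vertex; $\Pr_\mu$ denotes its law with $X_0\sim\mu$. Write $\mathbf p^t(u,v)=\Pr_u(X_t=v)$ and $\pi(v)=d(v)/(2|E|)$. The uniform mixing time is $t_{\mathrm{mix}}(G)=\min\{t\ge0:\max_{u,v\in V}|\mathbf p^t(u,v)/\pi(v)-1|\le 1/2\}$, and the bubble sum is $\mathcal B(G)=\sum_{t=0}^{t_{\mathrm{mix}}(G)}(t+1)\sup_{v}\mathbf p^t(v,v)$. Assumptions with parameters $D,\alpha,\theta>0$: (bal) $\Delta(G)/\delta(G)\le D$; (mix) $t_{\mathrm{mix}}(G)\le n^{1/2-\alpha}$; (esc) $\mathcal B(G)\le\theta$. The run time is $r=n^{1/2-\alpha/3}$ (rounded). For nonempty $U\subseteq V$, $\tau_U=\min\{t\ge0:X_t\in U\}$ and $\mathrm{Cap}_r(U)=\Pr_\pi(\tau_U<r)$. $\mathbf p_W^t(u,v)=\Pr(X_t=v\text{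 and }\{X_0,\dots,X_t\}\cap W=\varnothing\mid X_0=u)$ and the $W$-bubble sum is $\mathcal B_W(G)=\sum_{t=0}^\infty(t+1)\sup_{v\in V}\mathbf p_W^t(v,v)$. *)

From mathcomp Require Import all_boot.
From Stdlib Require Import Reals.
Set Implicit Arguments. Unset Strict Implicit. Unset Printing Implicit Defensive.

Section Walk.
Variables (V : finType) (adj : rel V).

Definition simple_graph : Prop :=
  (forall u v, adj u v = adj v u) /\ (forall u, adj u u = false).

Definition connected_graph : Prop := forall u v, connect adj u v.

Definition nverts : nat := #|V|.

Definition deg (v : V) : nat := #|[pred w | adj v w]|.

Definition maxdeg : nat := \max_(v : V) deg v.
Definition mindeg : nat := \big[minn/#|V|]_(v : V) deg v.

Definition rsum (f : V -> R) : R := \big[Rplus/0%R]_(v : V) f v.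
Definition rsup (f : V -> R) : R := \big[Rmax/0%R]_(v : V) f v.

(* 2|E| and stationary distribution pi(v) = d(v)/(2|E|) *)
Definition twoE : nat := \sum_(v : V) deg v.
Definition pi (v : V) : R := (INR (deg v) / INR twoE)%R.

(* one-step transition probability of the lazy random walk *)
Definition P (u v : V) : R :=
  ((if u == v then / 2 else 0) + (if adj u v then / (2 * INR (deg u)) else 0))%R.

(* p^t(u,v) = Pr_u(X_t = v) *)
Fixpoint pt (t : nat) (u v : V) : R :=
  match t with
  | 0 => if u == v then 1%R else 0%R
  | S k => rsum (fun w => pt k u w * P w v)%R
  end.

(* p_W^t(u,v) = Pr_u(X_t = v and X_0..X_t avoid W) *)
Fixpoint ptW (W : {set V}) (t : nat) (u v : V) : R :=
  match t with
  | 0 => if (u == v) && (u \notin W) then 1%R else 0%R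
  | S k => if v \in W then 0%R else rsum (fun w => ptW W k u w * P w v)%R
  end.

Definition unif_mixed (t : nat) : Prop :=
  forall u v, (Rabs (pt t u v / pi v - 1) <= / 2)%R.
Definition is_tmix (t : nat) : Prop :=
  unif_mixed t /\ forall s, (s < t)%N -> ~ unif_mixed s.

Definition bubble (tm : nat) : R :=
  \big[Rplus/0%R]_(0 <= t < tm.+1) (INR t.+1 * rsup (fun v => pt t v v))%R.

(* Pr_pi(X_0,...,X_{r-1} all avoid U) *)
Definition survive (U : {set V}) (r : nat) : R :=
  match r with
  | 0 => 1%R
  | S k => rsum (fun u => pi u * rsum (fun v => ptW U k u v))%R
  end.

(* Cap_r(U) = Pr_pi(tau_U < r) *)
Definition Cap (r : nat) (U : {set V}) : R := (1 - survive U r)%R.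

Definition bubbleW_partial (W : {set V}) (N : nat) : R :=
  \big[Rplus/0%R]_(0 <= t < N.+1) (INR t.+1 * rsup (fun v => ptW W t v v))%R.

(* B_W(G) <= c, where B_W(G) is the (nonnegative-term, possibly divergent)
   series sum_{t>=0} (t+1) sup_v p_W^t(v,v): i.e. all partial sums are <= c. *)
Definition bubbleW_le (W : {set V}) (c : R) : Prop :=
  forall N, (bubbleW_partial W N <= c)%R.

End Walk.

Definition run_time (n : nat) (alpha : R) : nat :=
  Z.to_nat (Int_part (Rpower (INR n) (/ 2 - alpha / 3) + / 2)).

From HB Require Import structures.
From Pilot Require Import Defs.
From mathcomp Require Import all_boot zify.
From Stdlib Require Import Reals Lra Lia Znat.

(** Let [alive t u] be the probability that the walk from [u] avoids [W] at
    times [0..t].  After [tm] steps the walk dominates half the stationary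
    distribution, so the next [r] positions meet [W] with probability at
    least [Cap_r(W) / 2]; hence every block of [L = tm + r - 1] steps
    multiplies [alive] by at most [q = 1 - Cap_r(W) / 2].  Splitting a
    return [p_W^(s + tm)(v,v)] into [s] killed steps followed by [tm] mixing
    steps bounds it by [(3/2) pi(v) alive s v <= (3D / 2n) q^j] when [s]
    lies in the [j]-th block.  The terms [t < tm] of the [W]-bubble sum are
    dominated by the ordinary bubble sum, and summing the geometric block
    bounds gives at most [(3D / 2n) (L^2 / c^2 + L (tm + 1) / c)] with
    [c = Cap_r(W) / 2 >= chi r / (2 sqrt n)].  For large [n] we have
    [r >= 3 tm - 1/2], so [L <= 3r/2] and this is at most [27 D / chi^2]. *)

Set Implicit Arguments. Unset Strict Implicit. Unset Printing Implicit Defensive.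

Lemma RplusA : associative Rplus. Proof. by move=> *; rewrite Rplus_assoc. Qed.
Lemma RmultA : associative Rmult. Proof. by move=> *; rewrite Rmult_assoc. Qed.
HB.instance Definition _ :=
  Monoid.isComLaw.Build R 0%R Rplus RplusA Rplus_comm Rplus_0_l.
HB.instance Definition _ :=
  Monoid.isComLaw.Build R 1%R Rmult RmultA Rmult_comm Rmult_1_l.
HB.instance Definition _ := Monoid.isMulLaw.Build R 0%R Rmult Rmult_0_l Rmult_0_r.
HB.instance Definition _ :=
  Monoid.isAddLaw.Build R Rmult Rplus Rmult_plus_distr_r Rmult_plus_distr_l.

Section RealSums.
Variable V : finType.
Implicit Types (f g : V -> R) (c : R).
Local Open Scope R_scope.

Lemma rsum_le f g : (forall v, f v <= g v) -> rsum f <= rsum g.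
Proof. by move=> fg; apply: (big_ind2 Rle) => // *; lra. Qed.

Lemma rsum_ge0 f : (forall v, 0 <= f v) -> 0 <= rsum f.
Proof. by move=> f0; apply: (big_ind (Rle 0)) => // *; lra. Qed.

Lemma eq_rsum f g : (forall v, f v = g v) -> rsum f = rsum g.
Proof. by move=> fg; apply: eq_bigr. Qed.

Lemma rsumD f g : rsum (fun v => f v + g v) = rsum f + rsum g.
Proof. exact: big_split. Qed.

Lemma rsumZl c f : rsum (fun v => c * f v) = c * rsum f.
Proof. by rewrite /rsum big_distrr. Qed.

Lemma rsumZr c f : rsum (fun v => f v * c) = rsum f * c.
Proof. by rewrite /rsum big_distrl. Qed.

Lemma exchange_rsum (F : V -> V -> R) :
  rsum (fun v => rsum (F v)) = rsum (fun w => rsum (F^~ w)).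
Proof. exact: exchange_big. Qed.

Lemma rsum_pred1 (v : V) c : rsum (fun w => if w == v then c else 0) = c.
Proof. by rewrite /rsum -big_mkcond big_pred1_eq. Qed.

Lemma rsum_pred_const (A : pred V) c :
  rsum (fun v => if A v then c else 0) = INR #|A| * c.
Proof.
rewrite /rsum -big_mkcond big_const; elim: #|A| => [|k IH]; first by rewrite /=; ring.
by rewrite S_INR Rmult_plus_distr_r -IH /=; ring.
Qed.

Lemma rsum_const c : rsum (fun _ : V => c) = INR #|V| * c.
Proof. by rewrite -(rsum_pred_const predT). Qed.

Lemma rsum_INR (F : V -> nat) : rsum (fun v => INR (F v)) = INR (\sum_v F v).
Proof. by apply/esym/big_morph => //; exact: plus_INR. Qed.

Lemma rsup_ge f v : f v <= rsup f.
Proof.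
rewrite /rsup; have : v \in index_enum V by rewrite mem_index_enum.
elim: (index_enum V) => [//|x s IH]; rewrite inE big_cons => /orP [/eqP ->|/IH].
  exact: Rmax_l.
by move/Rle_trans; apply; apply: Rmax_r.
Qed.

Lemma rsup_ge0 f : 0 <= rsup f.
Proof.
rewrite /rsup; elim: (index_enum V) => [|x s IH]; rewrite ?big_nil ?big_cons.
  exact: Rle_refl.
exact: Rle_trans IH (Rmax_r _ _).
Qed.

Lemma rsup_le f B : 0 <= B -> (forall v, f v <= B) -> rsup f <= B.
Proof. by move=> B0 fB; apply: (big_ind (Rle^~ B)) => // *; apply: Rmax_lub. Qed.

Lemma le_rsup f g : (forall v, f v <= g v) -> rsup f <= rsup g.
Proof.
move=> fg; apply: rsup_le => [|v]; first exact: rsup_ge0.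
exact: Rle_trans (fg v) (rsup_ge g v).
Qed.

End RealSums.

Section LazyWalk.
Variables (V : finType) (adj : rel V).

Lemma connected_deg_gt0 :
  connected_graph adj -> 1 < #|V| -> forall v, 0 < deg adj v.
Proof.
move=> conn V_gt1 v; have [u] : exists u, u \in predC1 v.
  by apply/card_gt0P; rewrite cardC1; lia.
rewrite inE => uv; have /connectP [[|x p] /= vp uE] := conn v u.
  by rewrite uE eqxx in uv.
by apply/card_gt0P; exists x; case/andP: vp.
Qed.

Hypothesis deg_gt0 : forall v, 0 < deg adj v.
Local Open Scope R_scope.

Lemma P_ge0 u v : 0 <= P adj u v.
Proof.
have du : 0 < INR (deg adj u) by apply: lt_0_INR; have := deg_gt0 u; lia.
have : 0 < / (2 * INR (deg adj u)) by apply: Rinv_0_lt_compat; lra.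
by rewrite /P; case: (u == v); case: (adj u v); lra.
Qed.

Lemma P_sum1 u : rsum (P adj u) = 1.
Proof.
have du : 0 < INR (deg adj u) by apply: lt_0_INR; have := deg_gt0 u; lia.
rewrite rsumD (eq_rsum (g := fun v => if v == u then / 2 else 0)).
  rewrite rsum_pred1 (rsum_pred_const [pred w | adj u w]) -/(deg adj u).
  by field; lra.
by move=> v; rewrite eq_sym.
Qed.

Lemma pt_ge0 t u v : 0 <= pt adj t u v.
Proof.
elim: t v => [|t IH] v /=; first by case: eqP; lra.
by apply: rsum_ge0 => w; apply: Rmult_le_pos; [apply: IH|apply: P_ge0].
Qed.

Lemma pt_sum1 t u : rsum (pt adj t u) = 1.
Proof.
elim: t => [|t IH] /=.
  by rewrite (eq_rsum (g := fun v => if v == u then 1 else 0)) ?rsum_pred1 // => v; rewrite eq_sym.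
rewrite exchange_rsum -IH; apply: eq_rsum => w.
by rewrite rsumZl P_sum1 Rmult_1_r.
Qed.

Variable W : {set V}.

Lemma ptW_ge0 t u v : 0 <= ptW adj W t u v.
Proof.
elim: t v => [|t IH] v /=; first by case: (_ && _); lra.
case: (v \in W); first lra.
by apply: rsum_ge0 => w; apply: Rmult_le_pos; [apply: IH|apply: P_ge0].
Qed.

Lemma ptW_le_pt t u v : ptW adj W t u v <= pt adj t u v.
Proof.
elim: t v => [|t IH] v /=; first by case: (u == v); case: (u \notin W) => /=; lra.
case: (v \in W); first by apply: rsum_ge0 => w; apply: Rmult_le_pos; [apply: pt_ge0|apply: P_ge0].
by apply: rsum_le => w; apply: Rmult_le_compat_r; [apply: P_ge0|apply: IH].
Qed.

Lemma ptW_in t u v : v \in W -> ptW adj W t u v = 0.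
Proof. by case: t => [|t] /= vW; [case: eqP => [->|] //=; rewrite vW|rewrite vW]. Qed.

Lemma ptW_add a b u v :
  ptW adj W (a + b) u v = rsum (fun w => ptW adj W a u w * ptW adj W b w v).
Proof.
elim: b v => [|b IH] v /=.
  rewrite addn0 (eq_rsum (g := fun w =>
    if w == v then ptW adj W a u v * (if v \notin W then 1 else 0) else 0)).
    rewrite rsum_pred1; case: (boolP (v \in W)) => vW /=; last exact/esym/Rmult_1_r.
    by rewrite ptW_in // Rmult_0_r.
  by move=> w; case: eqP => [->|_] /=; [case: (v \notin W)|rewrite Rmult_0_r].
rewrite addnS /=; case: (v \in W).
  by rewrite rsumZr Rmult_0_r.
rewrite (eq_rsum (g := fun x => rsum (fun w => ptW adj W a u w * ptW adj W b w x * P adj x v))).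
  rewrite exchange_rsum; apply: eq_rsum => w; rewrite -rsumZl.
  by apply: eq_rsum => x; ring.
by move=> x; rewrite IH -rsumZr.
Qed.

Definition alive t u := rsum (ptW adj W t u).

Lemma alive_ge0 t u : 0 <= alive t u.
Proof. by apply: rsum_ge0 => v; apply: ptW_ge0. Qed.

Lemma alive_le1 t u : alive t u <= 1.
Proof. by rewrite -(pt_sum1 t u); apply: rsum_le => v; apply: ptW_le_pt. Qed.

Lemma alive_add a b u :
  alive (a + b) u = rsum (fun w => ptW adj W a u w * alive b w).
Proof.
rewrite /alive (eq_rsum (fun v => ptW_add a b u v)) exchange_rsum.
by apply: eq_rsum => w; rewrite rsumZl.
Qed.

End LazyWalk.

Section StationaryStart.
Variables (V : finType) (adj : rel V).
Hypotheses (deg_gt0 : forall v, 0 < deg adj v) (V_gt1 : 1 < #|V|).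

Lemma mindeg_le v : mindeg adj <= deg adj v.
Proof.
rewrite /mindeg; have : v \in index_enum V by rewrite mem_index_enum.
elim: (index_enum V) => [//|x s IH]; rewrite inE big_cons => /orP [/eqP ->|/IH].
  exact: geq_minl.
exact: leq_trans (geq_minr _ _).
Qed.

Lemma mindeg_gt0 : 0 < mindeg adj.
Proof.
apply: (big_ind (leq 1)) => [|x y|v _]; [lia| |exact: deg_gt0].
by rewrite leq_min => -> ->.
Qed.

Lemma card_mul_mindeg_le : #|V| * mindeg adj <= twoE adj.
Proof. by rewrite -sum_nat_const; apply: leq_sum => v _; apply: mindeg_le. Qed.

Local Open Scope R_scope.

Lemma twoE_gt0 : 0 < INR (twoE adj).
Proof.
apply: lt_0_INR; have := card_mul_mindeg_le; have := mindeg_gt0; nia.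
Qed.

Lemma pi_gt0 v : 0 < Defs.pi adj v.
Proof.
apply: Rdiv_lt_0_compat; last exact: twoE_gt0.
by apply: lt_0_INR; have := deg_gt0 v; lia.
Qed.

Lemma pi_sum1 : rsum (Defs.pi adj) = 1.
Proof.
have := twoE_gt0; rewrite /Defs.pi /Rdiv rsumZr rsum_INR -/(twoE adj) => ?.
by field; lra.
Qed.

Lemma pi_le_bal (D : R) :
  INR (maxdeg adj) / INR (mindeg adj) <= D -> forall v, Defs.pi adj v <= D / INR #|V|.
Proof.
move=> bal v; have dmin : 0 < INR (mindeg adj) by apply: lt_0_INR; have := mindeg_gt0; lia.
have n_gt0 : 0 < INR #|V| by apply: lt_0_INR; lia.
have := twoE_gt0; have := pi_gt0 v; rewrite /Defs.pi => piv Et.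
have dv : INR (deg adj v) <= D * INR (mindeg adj).
  apply: Rle_trans (_ : INR (maxdeg adj) <= _).
    by apply: le_INR; apply/leP; apply: (leq_bigmax v).
  by move: bal; rewrite /Rdiv => /(Rmult_le_compat_r _ _ _ (Rlt_le _ _ dmin));
     rewrite Rmult_assoc Rinv_l ?Rmult_1_r; lra.
have nE : INR #|V| * INR (mindeg adj) <= INR (twoE adj).
  by rewrite -mult_INR; apply: le_INR; apply/leP; apply: card_mul_mindeg_le.
apply: (Rmult_le_reg_r (INR (twoE adj) * INR #|V|)); first nra.
have -> : INR (deg adj v) / INR (twoE adj) * (INR (twoE adj) * INR #|V|)
          = INR (deg adj v) * INR #|V| by field; lra.
have -> : D / INR #|V| * (INR (twoE adj) * INR #|V|) = D * INR (twoE adj) by field; lra.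
have D_ge0 : 0 <= D.
  apply: Rle_trans bal; apply: Rmult_le_pos; [apply: pos_INR|apply: Rlt_le; apply: Rinv_0_lt_compat; exact: dmin].
nra.
Qed.

Lemma unif_mixed_bounds t : unif_mixed adj t -> forall u v,
  Defs.pi adj v / 2 <= pt adj t u v <= 3 / 2 * Defs.pi adj v.
Proof.
move=> mixed u v; have piv := pi_gt0 v.
have := mixed u v; set x := pt adj t u v / _.
have -> : pt adj t u v = x * Defs.pi adj v by rewrite /x; field; lra.
clearbody x; rewrite /Rabs; case: Rcase_abs => sgn dist; split; nra.
Qed.

Lemma not_unif_mixed0 : ~ unif_mixed adj 0.
Proof.
have [[u v] /=] : exists uv : V * V, uv.1 != uv.2.
  have [u _] : exists u : V, u \in V by apply/card_gt0P; exact: ltnW.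
  have [v] : exists v, v \in predC1 u by apply/card_gt0P; rewrite cardC1; lia.
  by rewrite inE => vu; exists (u, v); rewrite eq_sym.
move=> /negbTE uv /(_ u v); rewrite /= uv /Rdiv Rmult_0_l Rabs_left; lra.
Qed.

Variable W : {set V}.

Lemma Cap_S k : Cap adj k.+1 W = 1 - rsum (fun u => Defs.pi adj u * alive adj W k u).
Proof. by []. Qed.

Lemma Cap_le1 r : Cap adj r W <= 1.
Proof.
case: r => [|k]; first by rewrite /Cap /survive; lra.
suff : 0 <= rsum (fun u => Defs.pi adj u * alive adj W k u) by rewrite Cap_S; lra.
by apply: rsum_ge0 => u; apply: Rmult_le_pos; [apply: Rlt_le; apply: pi_gt0|apply: alive_ge0].
Qed.

Section Mixed.
Variable tm : nat.
Hypothesis mixed : unif_mixed adj tm.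

Lemma alive_mixing_block k w : alive adj W (tm + k) w <= 1 - Cap adj k.+1 W / 2.
Proof.
rewrite alive_add; apply: Rle_trans (_ : rsum (fun x =>
  pt adj tm w x + (- / 2) * Defs.pi adj x + / 2 * (Defs.pi adj x * alive adj W k x)) <= _).
  apply: rsum_le => x; have [pi_le_pt _] := unif_mixed_bounds mixed w x.
  have alive_x_ge0 := alive_ge0 deg_gt0 W k x; have alive_x_le1 := alive_le1 deg_gt0 W k x.
  have ptW_le := ptW_le_pt deg_gt0 W tm w x.
  have : 0 <= (pt adj tm w x - ptW adj W tm w x) * alive adj W k x by apply: Rmult_le_pos; lra.
  have : 0 <= (pt adj tm w x - Defs.pi adj x / 2) * (1 - alive adj W k x).
    by apply: Rmult_le_pos; lra.
  lra.
rewrite !rsumD !rsumZl (pt_sum1 deg_gt0) pi_sum1 Cap_S; lra.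
Qed.

Lemma alive_geometric k j i u :
  alive adj W (j * (tm + k) + i) u <= (1 - Cap adj k.+1 W / 2) ^ j.
Proof.
have q_ge0 : 0 <= 1 - Cap adj k.+1 W / 2 by have := Cap_le1 k.+1; lra.
elim: j i u => [|j IH] i u; first exact: alive_le1.
have -> : (j.+1 * (tm + k) + i = j * (tm + k) + i + (tm + k))%nat by lia.
rewrite alive_add /=.
apply: Rle_trans (_ : rsum (fun w => ptW adj W _ u w * (1 - Cap adj k.+1 W / 2)) <= _).
  by apply: rsum_le => w; apply: Rmult_le_compat_l; [apply: ptW_ge0|apply: alive_mixing_block].
by rewrite rsumZr -/(alive adj W _ u) Rmult_comm; apply: Rmult_le_compat_l => //; apply: IH.
Qed.

Lemma ptW_return_le s v :
  ptW adj W (s + tm) v v <= 3 / 2 * Defs.pi adj v * alive adj W s v.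
Proof.
rewrite ptW_add /alive Rmult_comm -rsumZr; apply: rsum_le => w.
apply: Rmult_le_compat_l; first exact: ptW_ge0.
exact: Rle_trans (ptW_le_pt deg_gt0 W tm w v) (proj2 (unif_mixed_bounds mixed w v)).
Qed.

End Mixed.
End StationaryStart.

Local Notation nsum m n F := (\big[Rplus/0%R]_(m <= i < n) F i).

Section NatSums.
Local Open Scope R_scope.

Lemma nsum_recr (n : nat) (F : nat -> R) : nsum 0 n.+1 F = nsum 0 n F + F n.
Proof. exact: big_nat_recr. Qed.

Lemma nsum_le (n : nat) (F G : nat -> R) :
  (forall i, F i <= G i) -> nsum 0 n F <= nsum 0 n G.
Proof. by move=> FG; apply: (big_ind2 Rle) => // *; lra. Qed.

Lemma rsum_ord (n : nat) (F : nat -> R) :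
  rsum (fun i : 'I_n => F i) = nsum 0 n F.
Proof. by rewrite big_mkord. Qed.

Lemma nsum_cat (m n : nat) (F : nat -> R) :
  nsum 0 (m + n)%nat F = nsum 0 m F + rsum (fun i : 'I_n => F (m + i)%nat).
Proof. by rewrite !big_mkord big_split_ord. Qed.

Lemma nsum_widen_le (m n : nat) (F : nat -> R) :
  leq m n -> (forall i, 0 <= F i) -> nsum 0 m F <= nsum 0 n F.
Proof.
move=> mn F_ge0; rewrite -(subnKC mn) nsum_cat.
suff : 0 <= rsum (fun i : 'I_(n - m) => F (m + i)%nat) by lra.
by apply: rsum_ge0.
Qed.

End NatSums.

Section GeometricBlocks.
Local Open Scope R_scope.
Variable q : R.
Hypotheses (q_ge0 : 0 <= q) (q_lt1 : q < 1).

Lemma sum_geom_le (J : nat) : nsum 0 J (fun j => q ^ j) <= / (1 - q).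
Proof.
have -> : nsum 0 J (fun j => q ^ j) = (1 - q ^ J) / (1 - q).
  elim: J => [|J IH]; first by rewrite big_geq //=; field; lra.
  by rewrite big_nat_recr //= IH; field; lra.
have := pow_le q J q_ge0; have : 0 < / (1 - q) by apply: Rinv_0_lt_compat; lra.
rewrite /Rdiv; nra.
Qed.

Lemma sum_geom_weighted_le (J : nat) :
  nsum 0 J (fun j => INR j.+1 * q ^ j) <= / (1 - q) ^ 2.
Proof.
have -> : nsum 0 J (fun j => INR j.+1 * q ^ j)
          = (1 - INR J.+1 * q ^ J + INR J * q ^ J.+1) / (1 - q) ^ 2.
  elim: J => [|J IH]; first by rewrite big_geq //=; field; lra.
  by rewrite big_nat_recr // IH !S_INR /=; field; lra.
have qJ := pow_le q J q_ge0; have J0 := pos_INR J.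
have : 0 <= q ^ J * (1 + INR J * (1 - q)) by apply: Rmult_le_pos; nra.
have : 0 < / (1 - q) ^ 2 by apply: Rinv_0_lt_compat; nra.
rewrite /Rdiv S_INR /=; nra.
Qed.

(* Index [s = j L + i] of the [j]-th block has weight [s + a <= (j + 1) L + a]. *)
Lemma blocked_sum_le (g : nat -> R) (L a : nat) (K : R) (J : nat) :
  0 <= K -> (forall s, 0 <= g s) ->
  (forall j (i : 'I_L), g (j * L + i)%nat <= K * q ^ j) ->
  nsum 0 (J * L)%nat (fun s => INR (s + a) * g s)
    <= K * (INR L ^ 2 / (1 - q) ^ 2 + INR L * INR a / (1 - q)).
Proof.
move=> K_ge0 g_ge0 g_le; apply: Rle_trans (_ : K * (INR L ^ 2 *
  nsum 0 J (fun j => INR j.+1 * q ^ j) + INR L * INR a * nsum 0 J (fun j => q ^ j)) <= _).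
  elim: J => [|J IH]; first by rewrite !big_geq //=; lra.
  rewrite mulSnr nsum_cat !nsum_recr.
  apply: Rle_trans (Rplus_le_compat _ _ _ _ IH
    (_ : _ <= rsum (fun _ : 'I_L => INR (J * L + L + a)%nat * (K * q ^ J)))) _.
    apply: rsum_le => i; apply: Rmult_le_compat; [exact: pos_INR|exact: g_ge0| |].
      by apply: le_INR; have := ltn_ord i; lia.
    exact: g_le.
  rewrite rsum_const card_ord !plus_INR mult_INR S_INR; right; ring.
have ? := pow_le q; have ? := pos_INR L; have ? := pos_INR a.
apply: Rmult_le_compat_l => //; apply: Rplus_le_compat.
  by apply: Rmult_le_compat_l; [nra|apply: sum_geom_weighted_le].
rewrite /Rdiv; apply: Rmult_le_compat_l; [nra|apply: sum_geom_le].
Qed.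

End GeometricBlocks.

Section KilledBubbleSum.
Variables (V : finType) (adj : rel V) (W : {set V}) (tm k : nat).
Hypotheses (deg_gt0 : forall v, 0 < deg adj v) (V_gt1 : 1 < #|V|).
Hypothesis mixed : unif_mixed adj tm.
Local Open Scope R_scope.
Variable pmax : R.
Hypothesis pi_le : forall v, Defs.pi adj v <= pmax.
Hypothesis Cap_gt0 : 0 < Cap adj k.+1 W.

Let pmax_ge0 : 0 <= pmax.
Proof.
have [v _] : exists v : V, v \in V by apply/card_gt0P; exact: ltnW.
exact: Rle_trans (Rlt_le _ _ (pi_gt0 deg_gt0 V_gt1 v)) (pi_le v).
Qed.

Let L := (tm + k)%nat.
Let q := 1 - Cap adj k.+1 W / 2.

Lemma killed_return_le j (i : 'I_L) :
  rsup (fun v => ptW adj W (j * L + i + tm) v v) <= 3 / 2 * pmax * q ^ j.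
Proof.
have q_ge0 : 0 <= q by have := Cap_le1 deg_gt0 V_gt1 W k.+1; rewrite /q; lra.
apply: rsup_le => [|v]; first by apply: Rmult_le_pos; [lra|apply: pow_le].
apply: Rle_trans (ptW_return_le deg_gt0 V_gt1 W mixed _ v) _.
have := alive_geometric deg_gt0 V_gt1 W mixed k j i v.
have := alive_ge0 deg_gt0 W (j * L + i) v.
have := pi_le v; have := pi_gt0 deg_gt0 V_gt1 v; rewrite -/q -/L; nra.
Qed.

Lemma bubbleW_partial_le N :
  bubbleW_partial adj W N <= bubble adj tm + 3 / 2 * pmax *
    (INR L ^ 2 / (Cap adj k.+1 W / 2) ^ 2 + INR L * INR tm.+1 / (Cap adj k.+1 W / 2)).
Proof.
have -> : Cap adj k.+1 W / 2 = 1 - q by rewrite /q; ring.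
have tm_gt0 : (0 < tm)%nat.
  by case: tm mixed => // /(not_unif_mixed0 V_gt1).
set F := fun t => INR t.+1 * rsup (fun v => ptW adj W t v v).
have F_ge0 t : 0 <= F t by apply: Rmult_le_pos; [apply: pos_INR|apply: rsup_ge0].
apply: Rle_trans (nsum_widen_le (n := (tm + N.+1 * L)%nat) _ F_ge0) _.
  by rewrite /L; nia.
rewrite nsum_cat; apply: Rplus_le_compat.
  apply: Rle_trans (nsum_le _ (G := fun t => INR t.+1 * rsup (fun v => pt adj t v v)) _) _.
    move=> t; apply: Rmult_le_compat_l; first exact: pos_INR.
    by apply: le_rsup => v; apply: ptW_le_pt.
  rewrite /bubble nsum_recr.
  suff : 0 <= INR tm.+1 * rsup (fun v => pt adj tm v v) by lra.
  by apply: Rmult_le_pos; [apply: pos_INR|apply: rsup_ge0].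
rewrite (rsum_ord _ (fun s => F (tm + s)%nat)).
rewrite (eq_bigr (fun s => INR (s + tm.+1) * rsup (fun v => ptW adj W (s + tm) v v))).
  apply: blocked_sum_le => [|||s|j i].
  - by have := Cap_le1 deg_gt0 V_gt1 W k.+1; rewrite /q; lra.
  - by rewrite /q; lra.
  - by apply: Rmult_le_pos; lra.
  - exact: rsup_ge0.
  - exact: killed_return_le.
by move=> s _; rewrite /F addnS addnC.
Qed.

End KilledBubbleSum.

Section LargeGraphs.
Local Open Scope R_scope.

Lemma run_time_gt (n : nat) alpha :
  Rpower (INR n) (/ 2 - alpha / 3) - / 2 < INR (run_time n alpha).
Proof.
rewrite /run_time; set x := Rpower _ _ + / 2.
have x_gt0 : 0 < x by rewrite /x /Rpower; have := exp_pos ((/ 2 - alpha / 3) * ln (INR n)); lra.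
have [_ int_gt] := base_Int_part x.
have int_ge0 : (0 <= Int_part x)%Z.
  have : -1 < IZR (Int_part x) by lra.
  by move/(lt_IZR (-1)); lia.
rewrite [INR (Z.to_nat _)]INR_IZR_INZ Z2Nat.id //; rewrite /x in int_gt *; lra.
Qed.

(* Once [n ^ (2 alpha / 3) >= 3], i.e. [n >= 3 ^ (3 / (2 alpha))], the run
   time exceeds three mixing times. *)
Lemma run_time_large alpha : 0 < alpha ->
  exists N0 : nat, forall n tm : nat, leq N0 n ->
    INR tm <= Rpower (INR n) (/ 2 - alpha) ->
    3 * INR tm - / 2 < INR (run_time n alpha).
Proof.
move=> alpha_gt0; set x0 := Rpower 3 (3 / (2 * alpha)).
have x0_gt0 : 0 < x0 by apply: exp_pos.
have [up_gt _] := archimed x0.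
have up_ge0 : (0 <= up x0)%Z by apply: le_IZR; lra.
exists (Z.to_nat (up x0)) => n tm N0n tm_le.
have x0_le : x0 <= INR n.
  apply: Rle_trans (_ : INR (Z.to_nat (up x0)) <= _); last exact/le_INR/leP.
  by rewrite INR_IZR_INZ Z2Nat.id //; lra.
have three_le : 3 <= Rpower (INR n) (2 * alpha / 3).
  apply: Rle_trans (_ : Rpower x0 (2 * alpha / 3) <= _); last by apply: Rle_Rpower_l; lra.
  rewrite /x0 Rpower_mult.
  have -> : 3 / (2 * alpha) * (2 * alpha / 3) = 1 by field; lra.
  by rewrite Rpower_1; lra.
have := run_time_gt n alpha.
have -> : / 2 - alpha / 3 = (/ 2 - alpha) + 2 * alpha / 3 by field.
rewrite Rpower_plus; have := pos_INR tm; nra.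
Qed.

Lemma tail_term_le (D n chi C T K : R) :
  0 < D -> 0 < n -> 0 < chi -> 0 < C <= 1 -> chi * (K + 1) / sqrt n <= C ->
  1 <= T -> 3 * T - / 2 < K + 1 ->
  3 / 2 * (D / n) * ((T + K) ^ 2 / (C / 2) ^ 2 + (T + K) * (T + 1) / (C / 2))
    <= 27 * D / chi ^ 2.
Proof.
move=> D_gt0 n_gt0 chi_gt0 [C_gt0 C_le1] C_ge T_ge1 run_ge.
have sn_gt0 : 0 < sqrt n by apply: sqrt_lt_R0.
have sn2 : sqrt n * sqrt n = n by apply: sqrt_sqrt; lra.
set X := T + K; set u := / (C / 2).
have u_ge2 : 2 <= u.
  by apply: (Rmult_le_reg_l (C / 2)); [lra|rewrite /u Rinv_r; lra].
(* [X <= 3 (K + 1) / 2] and [C >= chi (K + 1) / sqrt n] give [X / (C / 2) <= 3 sqrt n / chi]. *)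
have Xu : X * u <= 3 * sqrt n / chi.
  have C_ge' : chi * (K + 1) <= C * sqrt n.
    by move: C_ge; rewrite /Rdiv => /(Rmult_le_compat_r _ _ _ (Rlt_le _ _ sn_gt0));
       rewrite Rmult_assoc Rinv_l; lra.
  apply: (Rmult_le_reg_l (chi * (C / 2))); first nra.
  have -> : chi * (C / 2) * (3 * sqrt n / chi) = 3 / 2 * (C * sqrt n) by field; lra.
  have -> : chi * (C / 2) * (X * u) = chi * X by rewrite /u; field; lra.
  rewrite /X; nra.
have Xu_ge0 : 0 <= X * u by rewrite /X; nra.
have Xu2 : (X * u) ^ 2 <= 9 * n / chi ^ 2.
  rewrite -sn2 (_ : 9 * (sqrt n * sqrt n) / chi ^ 2 = (3 * sqrt n / chi) ^ 2).
    exact: pow_incr.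
  by field; lra.
have cross_le : X * (T + 1) * u <= (X * u) ^ 2.
  have X_ge : T + 1 <= X by rewrite /X; lra.
  have : X * (T + 1) * u <= X * X * u by apply: Rmult_le_compat_r; nra.
  have : 0 <= X * X * u by nra.
  nra.
rewrite /Rdiv -/u -pow_inv -/u -/X.
have -> : X ^ 2 * u ^ 2 = (X * u) ^ 2 by ring.
have -> : 27 * D * / chi ^ 2 = 3 / 2 * (D * / n) * (2 * (9 * n / chi ^ 2)) by field; nra.
have : 0 <= D * / n by apply: Rmult_le_pos; [lra|apply: Rlt_le; apply: Rinv_0_lt_compat].
nra.
Qed.

End LargeGraphs.

Theorem mainTheorem20 :
  forall D alpha theta : R, (0 < D)%R -> (0 < alpha)%R -> (0 < theta)%R ->
  exists N0 : nat,
  forall (V : finType) (adj : rel V),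
    simple_graph adj -> connected_graph adj ->
    (N0 <= #|V|)%N ->
    (* (bal) *)
    (INR (maxdeg adj) / INR (mindeg adj) <= D)%R ->
    forall tm : nat, is_tmix adj tm ->
    (* (mix) *)
    (INR tm <= Rpower (INR #|V|) (/ 2 - alpha))%R ->
    (* (esc) *)
    (bubble adj tm <= theta)%R ->
    forall (chi : R) (W : {set V}), (0 < chi)%R -> W != set0 ->
    (Cap adj (run_time #|V| alpha) W
       >= chi * INR (run_time #|V| alpha) / sqrt (INR #|V|))%R ->
    bubbleW_le adj W (theta + 2 * D + 36 * D / (chi ^ 2))%R.
Proof.
move=> D alpha theta D_gt0 alpha_gt0 _; have [N0 run_time_ge] := run_time_large alpha_gt0.
exists (maxn 2 N0) => V adj _ conn N0_le bal tm [mixed _] mix esc chi W chi_gt0 _ capW N.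
have V_gt1 : 1 < #|V| by move: N0_le; rewrite geq_max => /andP [].
have deg_gt0 := connected_deg_gt0 conn V_gt1.
have tm_ge1 : (1 <= INR tm)%R.
  apply: (le_INR 1); suff : tm <> 0 by lia.
  by move=> tm0; move: mixed; rewrite tm0; apply: not_unif_mixed0.
have n_gt0 : (0 < INR #|V|)%R by apply: lt_0_INR; lia.
have := run_time_ge #|V| tm (leq_trans (leq_maxr 2 N0) N0_le) mix.
case: (run_time #|V| alpha) capW => [|k] capW run_time_k; first by rewrite /= in run_time_k; lra.
rewrite S_INR in capW run_time_k; move/Rge_le: capW => capW.
have Cap_gt0 : (0 < Cap adj k.+1 W)%R.
  apply: Rlt_le_trans capW; apply: Rdiv_lt_0_compat; last exact: sqrt_lt_R0.
  by apply: Rmult_lt_0_compat => //; have := pos_INR k; lra.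
have := tail_term_le D_gt0 n_gt0 chi_gt0 (conj Cap_gt0 (Cap_le1 deg_gt0 V_gt1 W _)) capW tm_ge1 run_time_k.
have := bubbleW_partial_le deg_gt0 V_gt1 mixed (pi_le_bal deg_gt0 V_gt1 bal) Cap_gt0 N.
rewrite plus_INR S_INR.
have : (0 <= D / chi ^ 2)%R by apply: Rlt_le; apply: Rdiv_lt_0_compat => //; apply: pow_lt.
lra.
Qed.
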